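(* Let $\{X_k\}_{k=0}^{N-1}$ be square random matrices and $\{y_k\}_{k=0}^{N-1}$ random vectors of compatible dimension, both with bounded second moments, and let $\{F_k\}_{k=0}^{N-1}$ be deterministic matrices of compatible dimensions. Suppose that $(X_k,y_k)$ may be dependent, but $X_k$ and $X_l$ are independent for $k\neq l$. Then $$\mathbb E\Big[\Big\|\sum_{k=0}^{N-1}F_kX_ky_k\Big\|^2\Big]\le\sum_{k=0}^{N-1}\|F_k\|^2\sqrt{\mathbb E[\|X_k\|^4]}\;\sqrt{\mathbb E\Big[\Big(\sum_{k=0}^{N-1}\|y_k\|^2\Big)^2\Big]}.$$
   Context: $\|\cdot\|$ denotes the Euclidean norm for vectors and the spectral norm for matrices. *)

From HB Require Import structures.
From mathcomp Require Import all_boot all_order all_algebra.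
From mathcomp Require Import all_classical all_reals all_analysis.
Set Implicit Arguments. Unset Strict Implicit. Unset Printing Implicit Defensive.
Import Order.TTheory GRing.Theory Num.Theory.
Local Open Scope classical_set_scope.
Local Open Scope ring_scope.

Definition vnorm {R : realType} {n : nat} (v : 'cV[R]_n) : R :=
  Num.sqrt (\sum_(i < n) v i 0 ^+ 2).

Definition spec_norm {R : realType} {m n : nat} (A : 'M[R]_(m, n)) : R :=
  sup [set vnorm (A *m v) | v in [set v : 'cV[R]_n | vnorm v <= 1]].

Definition mx_events {d} {T : measurableType d} {R : realType} {m n : nat}
  (X : T -> 'M[R]_(m, n)) : set (set T) :=
  [set A | exists (i : 'I_m) (j : 'I_n) (B : set R),
      measurable B /\ A = (fun w => X w i j) @^-1` B].

Definition sigma_mx {d} {T : measurableType d} {R : realType} {m n : nat}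
  (X : T -> 'M[R]_(m, n)) : set (set T) := <<s mx_events X >>.

Definition indep_mx {d} {T : measurableType d} {R : realType}
  (P : probability T R) {m1 n1 m2 n2 : nat}
  (X : T -> 'M[R]_(m1, n1)) (Y : T -> 'M[R]_(m2, n2)) : Prop :=
  forall A B, sigma_mx X A -> sigma_mx Y B -> P (A `&` B) = (P A * P B)%E.

(* Pointwise in w, the triangle inequality, |A v| <= |A| |v| and the discrete
   Cauchy-Schwarz inequality give
     |sum_k F_k X_k y_k|^2 <= (sum_k |F_k|^2 |X_k|^2) * Y,   Y := sum_k |y_k|^2.
   Integrating, and bounding each E[|X_k|^2 Y] by E[|X_k|^4]^(1/2) E[Y^2]^(1/2)
   (Cauchy-Schwarz in L^2), yields the claim.  The one technical point is the
   measurability of w |-> |X_k w|, a supremum over the unit ball: it is the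
   pointwise limit of maxima of |X_k w g| over finite grids g of the ball. *)

From HB Require Import structures.
From mathcomp Require Import all_boot all_order all_algebra.
From mathcomp Require Import all_classical all_reals all_analysis.
From mathcomp Require Import measurable_realfun.
From mathcomp Require Import ring.
Set Implicit Arguments. Unset Strict Implicit. Unset Printing Implicit Defensive.
Import Order.TTheory GRing.Theory Num.Theory.
Import numFieldNormedType.Exports.
Local Open Scope classical_set_scope.
Local Open Scope ring_scope.

Section EuclideanNorm.
Variable R : realType.

Lemma sumr_mul_sqr_le (I : finType) (a b : I -> R) :
  (\sum_i a i * b i) ^+ 2 <= (\sum_i a i ^+ 2) * (\sum_i b i ^+ 2).
Proof.
(* Lagrange: sum 2 a_i b_i a_j b_j <= (a_i b_j)^2 + (a_j b_i)^2 over all pairs (i, j). *)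
have amgm i j : (a i * b i) * (a j * b j) * 2 <= (a i * b j) ^+ 2 + (a j * b i) ^+ 2.
  by rewrite -subr_ge0 (_ : _ - _ = (a i * b j - a j * b i) ^+ 2) ?sqr_ge0 //; ring.
rewrite expr2 mulr_suml mulr_suml -(@ler_pM2r _ 2) //.
under eq_bigr do rewrite mulr_sumr.
rewrite mulr_suml; under eq_bigr do rewrite mulr_suml.
apply: le_trans (ler_sum _ (fun i _ => ler_sum _ (fun j _ => amgm i j))) _.
under eq_bigr do rewrite big_split /=.
rewrite big_split /= [X in _ + X]exchange_big /= -mulr2n mulr_natr ler_pMn2r //.
by apply: ler_sum => i _; rewrite mulr_sumr; apply: ler_sum => j _; rewrite exprMn.
Qed.

Lemma vnorm_ge0 n (v : 'cV[R]_n) : 0 <= vnorm v.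
Proof. exact: sqrtr_ge0. Qed.

Lemma vnorm_sqr n (v : 'cV[R]_n) : vnorm v ^+ 2 = \sum_i v i 0 ^+ 2.
Proof. by rewrite sqr_sqrtr // sumr_ge0 // => i _; exact: sqr_ge0. Qed.

Lemma vnorm0 n : vnorm (0 : 'cV[R]_n) = 0.
Proof. by rewrite /vnorm big1 ?sqrtr0 // => i _; rewrite mxE expr0n. Qed.

Lemma vnormZ n c (v : 'cV[R]_n) : vnorm (c *: v) = `|c| * vnorm v.
Proof.
rewrite /vnorm -sqrtr_sqr -sqrtrM ?sqr_ge0 // mulr_sumr.
by congr Num.sqrt; apply: eq_bigr => i _; rewrite mxE exprMn.
Qed.

Lemma ler_vnorm_sqr n (u v : 'cV[R]_n) :
  (vnorm u <= vnorm v) = (\sum_i u i 0 ^+ 2 <= \sum_i v i 0 ^+ 2).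
Proof. by rewrite -ler_sqr ?nnegrE ?vnorm_ge0 // !vnorm_sqr. Qed.

Lemma vnorm_entry_le n (v : 'cV[R]_n) i : `|v i 0| <= vnorm v.
Proof.
rewrite -sqrtr_sqr ler_sqrt; last by apply: sumr_ge0 => j _; exact: sqr_ge0.
by rewrite (bigD1 i) //= lerDl; apply: sumr_ge0 => j _; exact: sqr_ge0.
Qed.

Lemma ler_vnormD n (u v : 'cV[R]_n) : vnorm (u + v) <= vnorm u + vnorm v.
Proof.
rewrite -ler_sqr ?nnegrE ?addr_ge0 ?vnorm_ge0 // sqrrD !vnorm_sqr.
have -> : \sum_i (u + v) i 0 ^+ 2 =
    \sum_i u i 0 ^+ 2 + (\sum_i u i 0 * v i 0) *+ 2 + \sum_i v i 0 ^+ 2.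
  by rewrite -sumrMnl -!big_split /=; apply: eq_bigr => i _; rewrite mxE sqrrD.
rewrite lerD2r lerD2l lerMn2r /= -sqrtrM; last by apply: sumr_ge0 => i _; exact: sqr_ge0.
apply: le_trans (ler_norm _) _; rewrite -sqrtr_sqr ler_sqrt ?sumr_mul_sqr_le //.
by rewrite mulr_ge0 // sumr_ge0 // => i _; exact: sqr_ge0.
Qed.

Lemma ler_vnorm_sum (I : finType) n (z : I -> 'cV[R]_n) :
  vnorm (\sum_i z i) <= \sum_i vnorm (z i).
Proof.
elim/big_ind2: _ => [|u a v b ha hb|//]; first by rewrite vnorm0.
by apply: le_trans (ler_vnormD a b) _; exact: lerD.
Qed.

End EuclideanNorm.

Section OperatorNorms.
Variables (R : realType) (m n : nat).
Implicit Types (A : 'M[R]_(m, n)) (v : 'cV[R]_n).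

Definition frobenius_norm A : R := Num.sqrt (\sum_i \sum_j A i j ^+ 2).

Lemma frobenius_norm_ge0 A : 0 <= frobenius_norm A.
Proof. exact: sqrtr_ge0. Qed.

Lemma vnorm_mulmx_le_frobenius A v : vnorm (A *m v) <= frobenius_norm A * vnorm v.
Proof.
have sum_sqr_ge0 p (u : 'I_p -> R) : 0 <= \sum_j u j ^+ 2.
  by apply: sumr_ge0 => j _; exact: sqr_ge0.
rewrite /vnorm /frobenius_norm -sqrtrM; last by apply: sumr_ge0 => i _.
rewrite ler_sqrt; last by rewrite mulr_ge0 // sumr_ge0.
by rewrite mulr_suml; apply: ler_sum => i _; rewrite mxE sumr_mul_sqr_le.
Qed.

Let unit_ball_image A := [set vnorm (A *m v) | v in [set v : 'cV[R]_n | vnorm v <= 1]].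

Let unit_ball_image_ubound A : has_ubound (unit_ball_image A).
Proof.
exists (frobenius_norm A) => _ [v hv <-]; apply: le_trans (vnorm_mulmx_le_frobenius A v) _.
by rewrite ler_piMr ?frobenius_norm_ge0.
Qed.

Lemma vnorm_mulmx_le_spec_norm_unit A v : vnorm v <= 1 -> vnorm (A *m v) <= spec_norm A.
Proof. by move=> hv; apply: (ub_le_sup (unit_ball_image_ubound A)); exists v. Qed.

Lemma spec_norm_ge0 A : 0 <= spec_norm A.
Proof.
by have := @vnorm_mulmx_le_spec_norm_unit A 0; rewrite mulmx0 !vnorm0 ler01; apply.
Qed.

Lemma spec_norm_le A c :
  (forall v, vnorm v <= 1 -> vnorm (A *m v) <= c) -> spec_norm A <= c.
Proof.
move=> hc; apply: ge_sup => [|_ [v hv <-]]; last exact: hc.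
by exists (vnorm (A *m 0)), 0 => //=; rewrite vnorm0 ler01.
Qed.

Lemma vnorm_mulmx_le_spec_norm A v : vnorm (A *m v) <= spec_norm A * vnorm v.
Proof.
have [v0|vneq0] := eqVneq (vnorm v) 0.
  by apply: le_trans (vnorm_mulmx_le_frobenius A v) _; rewrite v0 !mulr0.
have vpos : 0 < vnorm v by rewrite lt_def vneq0 vnorm_ge0.
have unit_v : vnorm ((vnorm v)^-1 *: v) <= 1.
  by rewrite vnormZ ger0_norm ?invr_ge0 ?vnorm_ge0 // mulVf.
rewrite -ler_pdivrMr // mulrC -[_^-1]ger0_norm ?invr_ge0 ?vnorm_ge0 //.
by rewrite -vnormZ scalemxAr vnorm_mulmx_le_spec_norm_unit.
Qed.

End OperatorNorms.

Section GridApproximation.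
Variable R : realType.

Lemma round_toward_zero (M x : R) : 0 < M ->
  let r := (-1) ^+ (x < 0)%R * (Num.truncn (M * `|x|))%:R / M in
  r ^+ 2 <= x ^+ 2 /\ (x - r) ^+ 2 <= M^-1 ^+ 2.
Proof.
move=> M0 r; set s : R := (-1) ^+ (x < 0)%R; set t := (Num.truncn (M * `|x|))%:R / M.
have /andP[lo hi] := truncn_itv (mulr_ge0 (ltW M0) (normr_ge0 x)).
have t_ge0 : 0 <= t by rewrite divr_ge0 ?ler0n ?ltW.
have t_le : t <= `|x| by rewrite /t ler_pdivrMr // [_ * M]mulrC.
have gap : `|x| - t <= M^-1.
  rewrite lerBlDl /t -[X in _ + X]mul1r -mulrDl ler_pdivlMr // [_ * M]mulrC.
  by rewrite natr1 ltW.
have s2 : s ^+ 2 = 1 by rewrite sqrr_sign.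
have x_sign : x = s * `|x| by rewrite -numEsign.
have r_st : r = s * t by rewrite /r -mulrA.
split; first by rewrite r_st exprMn s2 mul1r -[x ^+ 2]real_normK ?num_real // ler_sqr ?nnegrE.
rewrite r_st {1}x_sign -mulrBr exprMn s2 mul1r.
by rewrite ler_sqr ?nnegrE ?subr_ge0 // invr_ge0 ltW.
Qed.

Variables m n : nat.

Definition grid_vec K (f : {ffun 'I_n -> 'I_K.+2 * bool}) : 'cV[R]_n :=
  \col_i ((-1) ^+ (f i).2 * ((f i).1 : nat)%:R / K.+1%:R).

Definition grid_max (K : nat) (A : 'M[R]_(m, n)) : R :=
  \big[Num.max/0]_(f | vnorm (@grid_vec K f) <= 1) vnorm (A *m grid_vec f).

Lemma grid_max_le_spec_norm K A : grid_max K A <= spec_norm A.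
Proof.
by apply: bigmax_le => [|f]; [exact: spec_norm_ge0 | exact: vnorm_mulmx_le_spec_norm_unit].
Qed.

Lemma spec_norm_le_grid_max K A :
  spec_norm A <= grid_max K A + frobenius_norm A * Num.sqrt n%:R / K.+1%:R.
Proof.
apply: spec_norm_le => v v_unit; set M : R := K.+1%:R.
have M_gt0 : 0 < M by rewrite ltr0Sn.
have trunc_small i : (Num.truncn (M * `|v i 0|)%R < K.+2)%N.
  rewrite truncn_lt_nat ?mulr_ge0 ?normr_ge0 ?ler0n //.
  apply: (@le_lt_trans _ _ M); last by rewrite ltr_nat.
  by rewrite ger_pMr // (le_trans (vnorm_entry_le v i)).
pose f : {ffun 'I_n -> 'I_K.+2 * bool} :=
  [ffun i => (Ordinal (trunc_small i), (v i 0 < 0)%R)].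
set g := grid_vec f.
have round i : g i 0 ^+ 2 <= v i 0 ^+ 2 /\ (v i 0 - g i 0) ^+ 2 <= M^-1 ^+ 2.
  by rewrite /g mxE ffunE; exact: round_toward_zero.
have g_unit : vnorm g <= 1.
  by apply: le_trans v_unit; rewrite ler_vnorm_sqr; apply: ler_sum => i _; case: (round i).
have err : vnorm (v - g) <= Num.sqrt n%:R * M^-1.
  have M_inv_ge0 : 0 <= M^-1 by rewrite invr_ge0 ltW.
  rewrite -ler_sqr ?nnegrE ?vnorm_ge0 ?mulr_ge0 ?sqrtr_ge0 //.
  rewrite vnorm_sqr exprMn sqr_sqrtr ?ler0n //.
  apply: (@le_trans _ _ (\sum_(i < n) M^-1 ^+ 2)); last by rewrite sumr_const card_ord mulr_natl.
  by apply: ler_sum => i _; rewrite 2!mxE; case: (round i).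
have -> : v = g + (v - g) by rewrite addrC subrK.
rewrite mulmxDr; apply: le_trans (ler_vnormD _ _) _; apply: lerD.
  exact: le_bigmax_cond.
apply: le_trans (vnorm_mulmx_le_frobenius _ _) _.
by rewrite -mulrA ler_wpM2l ?frobenius_norm_ge0.
Qed.

Lemma grid_max_cvg A : grid_max K A @[K --> \oo] --> spec_norm A.
Proof.
set c := frobenius_norm A * Num.sqrt n%:R.
apply: (@squeeze_cvgr _ _ _ _ (fun K => spec_norm A - c * harmonic K) (fun=> spec_norm A)).
- apply: nearW => K /=; rewrite grid_max_le_spec_norm andbT lerBlDr.
  by have := spec_norm_le_grid_max K A.
- rewrite -[X in _ --> X]subr0; apply: cvgB; first exact: cvg_cst.
  by rewrite -(mulr0 c); apply: cvgMr; exact: cvg_harmonic.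
- exact: cvg_cst.
Qed.

End GridApproximation.

Section Measurability.
Context d (T : measurableType d) (R : realType).

Lemma measurable_vnorm n (v : T -> 'cV[R]_n) :
  (forall i, measurable_fun setT (fun w => v w i 0)) ->
  measurable_fun setT (fun w => vnorm (v w)).
Proof.
move=> mv; apply: measurableT_comp; first exact: (continuous_measurable_fun (@sqrt_continuous R)).
by apply: measurable_sum => i; exact: measurable_funX.
Qed.

Lemma measurable_mulmx m n p (A : T -> 'M[R]_(m, n)) (B : T -> 'M[R]_(n, p)) :
  (forall i j, measurable_fun setT (fun w => A w i j)) ->
  (forall i j, measurable_fun setT (fun w => B w i j)) ->
  forall i j, measurable_fun setT (fun w => (A w *m B w) i j).
Proof.
move=> mA mB i j; under eq_fun do rewrite mxE.
by apply: measurable_sum => k; exact: measurable_funM.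
Qed.

Lemma measurable_bigmax (I : Type) (r : seq I) (P : pred I) (h : I -> T -> R) :
  (forall i, measurable_fun setT (h i)) ->
  measurable_fun setT (fun w => \big[Num.max/0]_(i <- r | P i) h i w).
Proof.
move=> mh; elim: r => [|i r IH]; first by under eq_fun do rewrite big_nil; exact: measurable_cst.
by under eq_fun do rewrite big_cons; case: (P i) => //; exact: measurable_maxr.
Qed.

Lemma measurable_spec_norm m n (A : T -> 'M[R]_(m, n)) :
  (forall i j, measurable_fun setT (fun w => A w i j)) ->
  measurable_fun setT (fun w => spec_norm (A w)).
Proof.
move=> mA; apply: (measurable_fun_cvg (h := fun K w => grid_max K (A w))); last first.
  by move=> w _; exact: grid_max_cvg.
move=> K; apply: measurable_bigmax => f; apply: measurable_vnorm => i.
by apply: measurable_mulmx => // i' j'; exact: measurable_cst.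
Qed.

End Measurability.

Lemma cauchy_schwarz_integral d (T : measurableType d) (R : realType)
    (mu : {measure set T -> \bar R}) (f g : T -> R) :
  measurable_fun setT f -> measurable_fun setT g ->
  (forall w, 0 <= f w) -> (forall w, 0 <= g w) ->
  (\int[mu]_w (f w * g w)%:E <=
   poweR (\int[mu]_w (f w ^+ 2)%:E) 2^-1 * poweR (\int[mu]_w (g w ^+ 2)%:E) 2^-1)%E.
Proof.
move=> mf mg f_ge0 g_ge0.
have half_half : (2^-1 + 2^-1 = 1 :> R) by rewrite -div1r -splitr.
have L1E : (\int[mu]_w `|(EFin \o (f \* g)%R) w| = \int[mu]_w (f w * g w)%:E)%E.
  by apply: eq_integral => w _ /=; rewrite ger0_norm // mulr_ge0.
have L2E h : (forall w, 0 <= h w) ->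
    (\int[mu]_w (`|(EFin \o h) w| `^ 2) = \int[mu]_w (h w ^+ 2)%:E)%E.
  by move=> h_ge0; apply: eq_integral => w _ /=; rewrite ger0_norm // powR_mulrn.
have := hoelder mu mf mg (ltr0Sn _ 1) (ltr0Sn _ 1) half_half.
by rewrite Lnorm1 !unlock /Lnorm L1E L2E // L2E.
Qed.

Lemma vnorm_sum_mulmx_sqr_le (R : realType) (I : finType) (m : nat) (p n : I -> nat)
    (F : forall k, 'M[R]_(m, p k)) (X : forall k, 'M[R]_(p k, n k))
    (y : forall k, 'cV[R]_(n k)) :
  vnorm (\sum_k F k *m X k *m y k) ^+ 2 <=
  (\sum_k spec_norm (F k) ^+ 2 * spec_norm (X k) ^+ 2) * \sum_k vnorm (y k) ^+ 2.
Proof.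
have term_le k : vnorm (F k *m X k *m y k) <=
                 spec_norm (F k) * spec_norm (X k) * vnorm (y k).
  rewrite -mulmxA -mulrA; apply: le_trans (vnorm_mulmx_le_spec_norm _ _) _.
  by rewrite ler_wpM2l ?spec_norm_ge0 ?vnorm_mulmx_le_spec_norm.
set S := \sum_k spec_norm (F k) * spec_norm (X k) * vnorm (y k).
have S_ge0 : 0 <= S by apply: sumr_ge0 => k _; rewrite !mulr_ge0 ?spec_norm_ge0 ?vnorm_ge0.
apply: (@le_trans _ _ (S ^+ 2)).
  rewrite ler_sqr ?nnegrE ?vnorm_ge0 //.
  by apply: le_trans (ler_vnorm_sum _) _; apply: ler_sum => k _; exact: term_le.
under [X in _ <= X * _]eq_bigr do rewrite -exprMn.
exact: sumr_mul_sqr_le.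
Qed.

Lemma ge0_integral_sumZ d (T : measurableType d) (R : realType)
    (mu : {measure set T -> \bar R}) (I : finType) (c : I -> R) (h : I -> T -> R) :
  (forall k, 0 <= c k) -> (forall k, measurable_fun setT (h k)) ->
  (forall k w, 0 <= h k w) ->
  (\int[mu]_w (\sum_k c k * h k w)%:E = \sum_k (c k)%:E * \int[mu]_w (h k w)%:E)%E.
Proof.
move=> c_ge0 mh h_ge0.
under eq_integral do rewrite -sumEFin.
rewrite ge0_integral_sum //; last first.
- by move=> k w _; rewrite lee_fin mulr_ge0.
- by move=> k; apply/measurable_EFinP; apply: measurable_funM => //; exact: measurable_cst.
apply: eq_bigr => k _; under eq_integral do rewrite EFinM.
by rewrite ge0_integralZl_EFin //; [move=> w _; rewrite lee_fin | exact/measurable_EFinP].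
Qed.

Section Expectation.
Context d (T : measurableType d) (R : realType) (mu : {measure set T -> \bar R}).
Variables (I : finType) (m : nat) (p n : I -> nat) (F : forall k, 'M[R]_(m, p k)).
Variables (X : forall k, T -> 'M[R]_(p k, n k)) (y : forall k, T -> 'cV[R]_(n k)).
Hypothesis mX : forall k i j, measurable_fun setT (fun w => X k w i j).
Hypothesis my : forall k i j, measurable_fun setT (fun w => y k w i j).

Lemma integral_vnorm_sum_mulmx_sqr_le :
  (\int[mu]_w (vnorm (\sum_k F k *m X k w *m y k w) ^+ 2)%:E <=
   \sum_k (spec_norm (F k) ^+ 2)%:E *
     \int[mu]_w (spec_norm (X k w) ^+ 2 * \sum_l vnorm (y l w) ^+ 2)%:E)%E.
Proof.
have mXsqr k : measurable_fun setT (fun w => spec_norm (X k w) ^+ 2).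
  exact/measurable_funX/measurable_spec_norm.
have mY : measurable_fun setT (fun w => \sum_l vnorm (y l w) ^+ 2).
  by apply: measurable_sum => l; apply/measurable_funX/measurable_vnorm => i.
rewrite -ge0_integral_sumZ => [|k|k|k w]; last 3 first.
- exact: sqr_ge0.
- exact: measurable_funM.
- by rewrite mulr_ge0 ?sqr_ge0 ?sumr_ge0 // => l _; exact: sqr_ge0.
apply: ge0_le_integral => //= [w _|||w _]; rewrite ?lee_fin ?sqr_ge0 //.
- apply/measurable_EFinP/measurable_funX/measurable_vnorm => i.
  under eq_fun do rewrite summxE.
  apply: measurable_sum => k; apply: measurable_mulmx; last exact: my.
  by apply: measurable_mulmx => [i' j'|]; [exact: measurable_cst | exact: mX].
- apply/measurable_EFinP/measurable_sum => k.
  by apply: measurable_funM; [exact: measurable_cst | exact: measurable_funM].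
- under [X in _ <= X]eq_bigr do rewrite mulrA; rewrite -mulr_suml.
  exact: vnorm_sum_mulmx_sqr_le.
Qed.

End Expectation.

Theorem lemma4 (d : measure_display) (T : measurableType d) (R : realType)
  (P : probability T R) (N m : nat) (n : 'I_N -> nat)
  (X : forall k : 'I_N, T -> 'M[R]_(n k))
  (y : forall k : 'I_N, T -> 'cV[R]_(n k))
  (F : forall k : 'I_N, 'M[R]_(m, n k))
  (hXmeas : forall k i j, measurable_fun setT (fun w => X k w i j))
  (hymeas : forall k i j, measurable_fun setT (fun w => y k w i j))
  (hX2 : forall k, (\int[P]_w ((spec_norm (X k w)) ^+ 2)%:E < +oo)%E)
  (hy2 : forall k, (\int[P]_w ((vnorm (y k w)) ^+ 2)%:E < +oo)%E)
  (hindep : forall k l : 'I_N, k != l -> indep_mx P (X k) (X l)) :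
  (\int[P]_w ((vnorm (\sum_(k < N) F k *m X k w *m y k w)) ^+ 2)%:E
   <= (\sum_(k < N) ((spec_norm (F k)) ^+ 2)%:E
         * poweR (\int[P]_w ((spec_norm (X k w)) ^+ 4)%:E) 2^-1)
      * poweR (\int[P]_w ((\sum_(k < N) (vnorm (y k w)) ^+ 2) ^+ 2)%:E) 2^-1)%E.
Proof.
apply: le_trans (integral_vnorm_sum_mulmx_sqr_le P F hXmeas hymeas) _.
rewrite ge0_sume_distrl => [|k _]; last by rewrite mule_ge0 ?lee_fin ?sqr_ge0 ?poweR_ge0.
apply: lee_sum => k _; rewrite -muleA lee_wpmul2l ?lee_fin ?sqr_ge0 //.
have fourth_moment : (\int[P]_w (spec_norm (X k w) ^+ 4)%:E =
                      \int[P]_w ((spec_norm (X k w) ^+ 2) ^+ 2)%:E)%E.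
  by apply: eq_integral => w _; rewrite -exprM.
rewrite fourth_moment; apply: cauchy_schwarz_integral => [||w|w].
- exact/measurable_funX/measurable_spec_norm.
- by apply: measurable_sum => l; apply/measurable_funX/measurable_vnorm => i.
- exact: sqr_ge0.
- by apply: sumr_ge0 => l _; exact: sqr_ge0.
Qed.
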